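(* The Perfect Split Heuristic $h$ is admissible on $\mathcal G_{\mathcal X,\mathcal Y}$: for every OR node $o$, $h(o)\le f(o)$, and for every AND node $a$, $h(a)\le f(a)$, where $f$ denotes the true value.
   Context: Let $x_1,\dots,x_N\in\{0,1\}^F$ be a binary dataset $\mathcal X$ with labels $\mathcal Y\in\{0,1\}^N$, $[N]=\{1,\dots,N\}$. For $\mathcal I\subseteq[N]$, $f\in[F]$, $k\in\{0,1\}$ let $\mathcal I|_{f=k}=\{i\in\mathcal I:(x_i)_f=k\}$, $c^k(\mathcal I)=|\{i\in\mathcal I:y_i=k\}|$, $\mathcal V(\mathcal I)=\{f:\mathcal I|_{f=0}\neq\emptyset\text{ and }\mathcal I|_{f=1}\neq\emptyset\}$. Fix $\rho^1,\rho^0>0$, $\alpha\in(0,1)$, $\beta\ge0$. Let $\ell_{\rm leaf}(c^1,c^0)=B(c^1+\rho^1,c^0+\rho^0)/B(\rho^1,\rho^0)$ ($B$ the Beta function), $p_{\rm split}(d)=\alpha(1+d)^{-\beta}$, $p_{\rm leaf}(d,\mathcal I)=1$ if $\mathcal V(\mathcal I)=\emptyset$ and $1-p_{\rm split}(d)$ otherwise, $p_{\rm inner}(d,\mathcal I)=0$ if $\mathcal V(\mathcal I)=\emptyset$ and $p_{\rm split}(d)/|\mathcal V(\mathcal I)|$ otherwise; $-\log0=+\infty$. $\mathcal G_{\mathcal X,\mathcal Y}$: for nonempty $\mathcal I\subseteq[N]$ and $d\in\{0,\dots,F\}$, an OR node $o_{\mathcal I,d}$ with a terminal child $t_{\mathcal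 I,d}$ via an edge of cost $-\log p_{\rm leaf}(d,\mathcal I)-\log\ell_{\rm leaf}(c^1(\mathcal I),c^0(\mathcal I))$; for $d<F$ and each $f\in\mathcal V(\mathcal I)$ an AND child $a_{\mathcal I,d,f}$ via an edge of cost $-\log p_{\rm inner}(d,\mathcal I)$, and $a_{\mathcal I,d,f}$ has cost-$0$ edges to $o_{\mathcal I|_{f=0},d+1}$ and $o_{\mathcal I|_{f=1},d+1}$; the root is $r=o_{[N],0}$ and only nodes reachable from $r$ are kept. A partial solution rooted at an OR node $u$ is a set $\mathcal S$ of nodes containing $u$, all reachable from $u$ inside $\mathcal S$, such that every AND node of $\mathcal S$ has both children in $\mathcal S$ and every OR node of $\mathcal S$ has exactly one child in $\mathcal S$; its cost is the sum of the costs of edges $v\to w$ with $v,w\in\mathcal S$. The true value $f(u)$ of an OR node $u$ is the minimum cost of a partial solution rooted at $u$; for an AND node $a$ with children $o_0,o_1$, $f(a)=f(o_0)+f(o_1)$. Perfect Split Heuristic: $h(t)=0$ for terminal nodes; $h(o_{\mathcal I,d})=-\max\{\log\ell_{\rm leaf}(c^1(\mathcal I),c^0(\mathcal I)),\ \log p_{\rm split}(d)+\log\ell_{\rm leaf}(c^1(\mathcal I),0)+\log\ell_{\rm leaf}(0,c^0(\mathcal I))\}$; $h(a_{\mathcal I,d,f})=h(o_{\mathcal I|_{f=0},d+1})+h(o_{\mathcal I|_{f=1},d+1})$. *)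

From HB Require Import structures.
From mathcomp Require Import all_boot all_order all_algebra.
From mathcomp Require Import all_classical all_reals all_analysis.

Set Implicit Arguments.
Unset Strict Implicit.
Unset Printing Implicit Defensive.

Import Order.TTheory GRing.Theory Num.Theory.

Local Open Scope classical_set_scope.
Local Open Scope ring_scope.

Definition Beta {R : realType} (a b : R) : R :=
  Rintegral (@lebesgue_measure R) `[0%R, 1%R]
            (fun t => t `^ (a - 1) * (1 - t) `^ (b - 1)).

Definition neglog {R : realType} (p : R) : \bar R :=
  if p == 0 then +oo%E else (- ln p)%:E.

(* Dataset: N points, F binary features; X i f = (x_i)_f, Y i = y_i. *)

Definition restr {N F : nat} (X : 'I_N -> 'I_F -> bool)
  (I : {set 'I_N}) (f : 'I_F) (k : bool) : {set 'I_N} :=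
  [set i in I | X i f == k].

Definition cnt {N : nat} (Y : 'I_N -> bool) (I : {set 'I_N}) (k : bool) : nat :=
  #|[set i in I | Y i == k]|.

Definition Vset {N F : nat} (X : 'I_N -> 'I_F -> bool) (I : {set 'I_N})
  : {set 'I_F} :=
  [set f : 'I_F | (restr X I f false != finset.set0) && (restr X I f true != finset.set0)].

Definition lleaf {R : realType} (rho1 rho0 : R) (c1 c0 : nat) : R :=
  Beta (c1%:R + rho1) (c0%:R + rho0) / Beta rho1 rho0.

Definition psplit {R : realType} (alpha beta : R) (d : nat) : R :=
  alpha * ((1 + d%:R) `^ (- beta)).

Definition pleaf {R : realType} {N F : nat} (alpha beta : R)
  (X : 'I_N -> 'I_F -> bool) (d : nat) (I : {set 'I_N}) : R :=
  if Vset X I == finset.set0 then 1 else 1 - psplit alpha beta d.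

Definition pinner {R : realType} {N F : nat} (alpha beta : R)
  (X : 'I_N -> 'I_F -> bool) (d : nat) (I : {set 'I_N}) : R :=
  if Vset X I == finset.set0 then 0 else psplit alpha beta d / #|Vset X I|%:R.

(* cost of the edge o_{I,d} -> t_{I,d} *)
Definition leaf_cost {R : realType} {N F : nat} (rho1 rho0 alpha beta : R)
  (X : 'I_N -> 'I_F -> bool) (Y : 'I_N -> bool) (I : {set 'I_N}) (d : nat)
  : \bar R :=
  (neglog (pleaf alpha beta X d I)
   + neglog (lleaf rho1 rho0 (cnt Y I true) (cnt Y I false)))%E.

(* cost of the edge o_{I,d} -> a_{I,d,f} *)
Definition inner_cost {R : realType} {N F : nat} (alpha beta : R)
  (X : 'I_N -> 'I_F -> bool) (I : {set 'I_N}) (d : nat) : \bar R :=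
  neglog (pinner alpha beta X d I).

(* Since the two children of
   an AND node a_{I,d,f} have disjoint (nonempty) index sets, a partial
   solution is a finite binary tree: at each OR node either the terminal
   child is chosen (PLeaf) or an AND child a_{I,d,f} (PSplit f t0 t1) together
   with partial solutions t0, t1 rooted at o_{I|f=0,d+1}, o_{I|f=1,d+1}. *)
Inductive ptree (F : nat) : Type :=
| PLeaf : ptree F
| PSplit : 'I_F -> ptree F -> ptree F -> ptree F.
Arguments PLeaf {F}.

Fixpoint valid {N F : nat} (X : 'I_N -> 'I_F -> bool) (I : {set 'I_N})
  (d : nat) (t : ptree F) : bool :=
  match t with
  | PLeaf => true
  | PSplit f t0 t1 =>
      [&& d < F, f \in Vset X I,
          valid X (restr X I f false) d.+1 t0
        & valid X (restr X I f true) d.+1 t1]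
  end%N.

Fixpoint cost {R : realType} {N F : nat} (rho1 rho0 alpha beta : R)
  (X : 'I_N -> 'I_F -> bool) (Y : 'I_N -> bool) (I : {set 'I_N}) (d : nat)
  (t : ptree F) : \bar R :=
  match t with
  | PLeaf => leaf_cost rho1 rho0 alpha beta X Y I d
  | PSplit f t0 t1 =>
      (inner_cost alpha beta X I d
       + cost rho1 rho0 alpha beta X Y (restr X I f false) d.+1 t0
       + cost rho1 rho0 alpha beta X Y (restr X I f true) d.+1 t1)%E
  end.

Definition fOR {R : realType} {N F : nat} (rho1 rho0 alpha beta : R)
  (X : 'I_N -> 'I_F -> bool) (Y : 'I_N -> bool) (I : {set 'I_N}) (d : nat)
  : \bar R :=
  ereal_inf [set cost rho1 rho0 alpha beta X Y I d t
            | t in [set t : ptree F | valid X I d t]].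

Definition fAND {R : realType} {N F : nat} (rho1 rho0 alpha beta : R)
  (X : 'I_N -> 'I_F -> bool) (Y : 'I_N -> bool) (I : {set 'I_N}) (d : nat)
  (f : 'I_F) : \bar R :=
  (fOR rho1 rho0 alpha beta X Y (restr X I f false) d.+1
   + fOR rho1 rho0 alpha beta X Y (restr X I f true) d.+1)%E.

Definition hOR {R : realType} {N : nat} (rho1 rho0 alpha beta : R)
  (Y : 'I_N -> bool) (I : {set 'I_N}) (d : nat) : R :=
  - Num.max (ln (lleaf rho1 rho0 (cnt Y I true) (cnt Y I false)))
            (ln (psplit alpha beta d)
             + ln (lleaf rho1 rho0 (cnt Y I true) 0)
             + ln (lleaf rho1 rho0 0 (cnt Y I false))).

Definition hAND {R : realType} {N F : nat} (rho1 rho0 alpha beta : R)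
  (X : 'I_N -> 'I_F -> bool) (Y : 'I_N -> bool) (I : {set 'I_N}) (d : nat)
  (f : 'I_F) : R :=
  hOR rho1 rho0 alpha beta Y (restr X I f false) d.+1
  + hOR rho1 rho0 alpha beta Y (restr X I f true) d.+1.

(* (I,d) such that o_{I,d} is reachable from the root o_{[N],0}
   (together with nonemptiness of I). *)
Inductive reach {N F : nat} (X : 'I_N -> 'I_F -> bool)
  : {set 'I_N} -> nat -> Prop :=
| reach_root : reach X [set: 'I_N] 0
| reach_step (I : {set 'I_N}) (d : nat) (f : 'I_F) (k : bool) :
    reach X I d -> (d < F)%N -> f \in Vset X I ->
    reach X (restr X I f k) d.+1.

From HB Require Import structures.
From mathcomp Require Import all_boot all_order all_algebra.
From mathcomp Require Import all_classical all_reals all_analysis.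
From mathcomp Require Import ring lra.

Import Order.TTheory GRing.Theory Num.Theory.
Local Open Scope ring_scope.

(* Write L(a,b) = ln l_leaf(a,b).  Since l_leaf(a,b) = E[t^a (1-t)^b] / E[1] for
   the Beta(rho1,rho0) weight on [0,1], Chebyshev's integral inequality gives
   L(a,b) <= L(a,0) + L(0,b) (t^a and (1-t)^b are oppositely ordered) and the
   superadditivity of L(.,0) and L(0,.) (powers of t, resp. of 1-t, are
   similarly ordered).  As p_split <= alpha < 1, the first inequality shows
   h(o_{I,d}) >= -(L(c1,0) + L(0,c0)), which is additive over the children of a
   split; with p_inner <= p_split the second makes h consistent along every
   split edge, and induction over partial solutions yields h(o) <= f(o). *)

Lemma exists_root01 {R : realType} (k : nat) (x : R) : (0 < k)%N ->
  0 <= x -> x <= 1 -> exists c, [/\ 0 <= c, c <= 1 & c ^+ k = x].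
Proof.
move=> k_gt0 x_ge0 x_le1; exists (x `^ k%:R^-1); split; first exact: powR_ge0.
  have : x `^ k%:R^-1 <= 1 `^ k%:R^-1.
    by apply: ge0_ler_powR; rewrite ?nnegrE ?invr_ge0.
  by rewrite powR1.
rewrite -powR_mulrn ?powR_ge0 // -powRrM mulVf ?powRr1 //.
by rewrite pnatr_eq0 -lt0n.
Qed.

Lemma exprn_itv01 {R : realType} n (x : R) : 0 <= x <= 1 -> 0 <= x ^+ n <= 1.
Proof. by move=> /andP[x_ge0 x_le1]; rewrite exprn_ge0 ?exprn_ile1. Qed.

Lemma subrX_mul_ge0 {R : realType} (x y : R) n k : 0 <= x -> 0 <= y ->
  0 <= (x ^+ n - y ^+ n) * (x ^+ k - y ^+ k).
Proof.
move=> x_ge0 y_ge0; have [xy|yx] := leP x y.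
  by apply: mulr_le0; rewrite subr_le0 lerXn2r.
by apply: mulr_ge0; rewrite subr_ge0 lerXn2r // ltW.
Qed.

Lemma subrX_mul_compl_le0 {R : realType} (x y : R) n k :
  0 <= x <= 1 -> 0 <= y <= 1 ->
  (x ^+ n - y ^+ n) * ((1 - x) ^+ k - (1 - y) ^+ k) <= 0.
Proof.
move=> /andP[x_ge0 x_le1] /andP[y_ge0 y_le1]; have [xy|yx] := leP x y.
  apply: mulr_le0_ge0; rewrite ?subr_le0 ?subr_ge0 lerXn2r ?nnegrE //; lra.
apply: mulr_ge0_le0; rewrite ?subr_le0 ?subr_ge0 lerXn2r ?nnegrE //; lra.
Qed.

Lemma ln_div_le {R : realType} (x y z v e : R) :
  0 < x -> 0 < y -> 0 < z -> 0 < v -> 0 < e -> x * y <= z * v ->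
  ln (x / e) + ln (y / e) <= ln (z / e) + ln (v / e).
Proof.
move=> x_gt0 y_gt0 z_gt0 v_gt0 e_gt0 le_xy_zv.
rewrite -!lnM ?posrE ?divr_gt0 // ler_ln ?posrE ?mulr_gt0 ?divr_gt0 ?invr_gt0 //.
by rewrite !mulf_div ler_pM2r // invr_gt0 mulr_gt0.
Qed.

Section PositiveIntegral.
Local Open Scope classical_set_scope.
Context {d : measure_display} {T : measurableType d} {R : realType}.
Variable mu : {measure set T -> \bar R}.

Lemma Rintegral_gt0 (A B : set T) (f : T -> R) (c : R) :
  measurable A -> measurable B -> A `<=` B -> mu.-integrable B (EFin \o f) ->
  (forall t, B t -> 0 <= f t) -> (forall t, A t -> c <= f t) ->
  0 < c -> (0 < mu A)%E -> 0 < \int[mu]_(t in B) f t.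
Proof.
move=> mA mB AB intf f_ge0 cf c_gt0 muA.
have /integrableP[mf _] := intf.
rewrite /Rintegral -lte_fin fineK; last exact: integrable_fin_num.
apply: (lt_le_trans _ (ge0_subset_integral mu mA mB mf _ AB)); last first.
  by move=> t /f_ge0; rewrite lee_fin.
apply: (lt_le_trans _ (ge0_le_integral mu mA (f1 := cst c%:E) _ (measurable_cst _)
  (measurable_funS mB AB mf) _)).
- by rewrite integral_cst // mule_gt0 // lte_fin.
- by move=> t _; rewrite lee_fin ltW.
- by move=> t /cf; rewrite lee_fin.
Qed.

End PositiveIntegral.

Section Chebyshev.
Local Open Scope classical_set_scope.
Context {d : measure_display} {T : measurableType d} {R : realType}.
Variables (mu : {measure set T -> \bar R}) (D : set T) (w : T -> R).
Hypotheses (mD : measurable D) (w_ge0 : forall t, D t -> 0 <= w t)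
  (w_int : mu.-integrable D (EFin \o w)).

Definition wint (f : T -> R) : R := \int[mu]_(t in D) (w t * f t).

Definition bdd_measurable (f : T -> R) : Prop :=
  measurable_fun D f /\ exists K : R, forall t, D t -> `|f t| <= K.

Lemma bdd_measurable_cst c : bdd_measurable (fun=> c).
Proof. by split; [exact: measurable_cst | exists `|c|]. Qed.

Lemma bdd_measurableD f g :
  bdd_measurable f -> bdd_measurable g -> bdd_measurable (fun t => f t + g t).
Proof.
move=> [mf [K1 fK1]] [mg [K2 gK2]]; split.
  exact: measurable_realfun.measurable_funD.
exists (K1 + K2) => t Dt.
by apply: le_trans (ler_normD _ _) _; apply: lerD; [exact: fK1 | exact: gK2].
Qed.

Lemma bdd_measurableM f g :
  bdd_measurable f -> bdd_measurable g -> bdd_measurable (fun t => f t * g t).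
Proof.
move=> [mf [K1 fK1]] [mg [K2 gK2]]; split.
  exact: measurable_realfun.measurable_funM.
by exists (K1 * K2) => t Dt; rewrite normrM ler_pM //; [exact: fK1 | exact: gK2].
Qed.

Lemma bdd_measurableZ c f : bdd_measurable f -> bdd_measurable (fun t => c * f t).
Proof. exact/bdd_measurableM/bdd_measurable_cst. Qed.

Lemma bdd_measurableB f g :
  bdd_measurable f -> bdd_measurable g -> bdd_measurable (fun t => f t - g t).
Proof.
move=> [mf [K1 fK1]] [mg [K2 gK2]]; split.
  exact: measurable_realfun.measurable_funB.
exists (K1 + K2) => t Dt.
by apply: le_trans (ler_normB _ _) _; apply: lerD; [exact: fK1 | exact: gK2].
Qed.

Lemma bdd_measurableX n f : bdd_measurable f -> bdd_measurable (fun t => f t ^+ n).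
Proof.
move=> [mf [K fK]]; split; first exact: measurable_realfun.measurable_funX.
exists (K ^+ n) => t Dt; rewrite normrX lerXn2r ?nnegrE ?fK //.
exact: le_trans (fK t Dt).
Qed.

Lemma integrable_wM f :
  bdd_measurable f -> mu.-integrable D (EFin \o (fun t => w t * f t)).
Proof.
move=> [mf [K fK]].
have f_bdd : [bounded f t | t in D].
  rewrite /bounded_near; near=> M => t Dt /=; apply: le_trans (fK t Dt) _.
  by near: M; exact/nbhs_pinfty_ge/num_real.
by apply: eq_integrable (integrableMl mD w_int mf f_bdd).
Unshelve. all: by end_near.
Qed.

Lemma wintD f g : bdd_measurable f -> bdd_measurable g ->
  wint (fun t => f t + g t) = wint f + wint g.
Proof.
move=> bf bg; rewrite /wint -RintegralD ?integrable_wM //.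
by apply: eq_Rintegral => t _; rewrite mulrDr.
Qed.

Lemma wintZ c f : bdd_measurable f -> wint (fun t => c * f t) = c * wint f.
Proof.
move=> bf; rewrite /wint -RintegralZl ?integrable_wM //.
by apply: eq_Rintegral => t _; rewrite mulrCA.
Qed.

Lemma wint_ge0 f : (forall t, D t -> 0 <= f t) -> 0 <= wint f.
Proof. by move=> f_ge0; apply: Rintegral_ge0 => t Dt; rewrite mulr_ge0 ?w_ge0 ?f_ge0. Qed.

Lemma ler_wint f g : bdd_measurable f -> bdd_measurable g ->
  (forall t, D t -> f t <= g t) -> wint f <= wint g.
Proof.
move=> bf bg fg; apply: le_Rintegral; rewrite ?integrable_wM // => t Dt.
by rewrite ler_wpM2l ?w_ge0 ?fg.
Qed.

Local Notation wint1 := (wint (fun=> 1)).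

(* If [m] is the weighted mean of [f], the covariance of [f] and [g] can be
   computed against any constant [g0]. *)
Lemma wint_cov f g m g0 : bdd_measurable f -> bdd_measurable g ->
  wint f = m * wint1 ->
  wint (fun t => (f t - m) * (g t - g0)) * wint1 =
  wint (fun t => f t * g t) * wint1 - wint f * wint g.
Proof.
move=> bf bg Ef.
have b1 := bdd_measurable_cst 1.
have bfg := bdd_measurableM _ _ bf bg.
have b_tail : bdd_measurable (fun t => - g0 * f t + m * g0 * 1).
  by apply: bdd_measurableD; apply: bdd_measurableZ.
have b_lin : bdd_measurable (fun t => - m * g t + (- g0 * f t + m * g0 * 1)).
  by apply: bdd_measurableD => //; apply: bdd_measurableZ.
rewrite (_ : wint _ = wint (fun t => f t * g t +
    (- m * g t + (- g0 * f t + m * g0 * 1)))); last first.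
  by apply: eq_Rintegral => t _; congr (_ * _); ring.
rewrite !wintD ?wintZ //; try exact: bdd_measurableZ.
by rewrite (_ : wint (fun t => f t) = m * wint1) //; ring.
Qed.

Lemma chebyshev_wint f g m g0 : bdd_measurable f -> bdd_measurable g ->
  wint f = m * wint1 -> (forall t, D t -> 0 <= (f t - m) * (g t - g0)) ->
  wint f * wint g <= wint (fun t => f t * g t) * wint1.
Proof.
move=> bf bg Ef fg_ge0.
have := wint_cov _ _ _ g0 bf bg Ef.
have := mulr_ge0 (wint_ge0 _ fg_ge0) (wint_ge0 _ (fun _ _ => ler01)).
lra.
Qed.

Lemma chebyshev_wint_rev f g m g0 : bdd_measurable f -> bdd_measurable g ->
  wint f = m * wint1 -> (forall t, D t -> (f t - m) * (g t - g0) <= 0) ->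
  wint (fun t => f t * g t) * wint1 <= wint f * wint g.
Proof.
move=> bf bg Ef fg_le0.
have cov_le0 : wint (fun t => (f t - m) * (g t - g0)) <= 0.
  rewrite -oppr_ge0 -mulN1r -wintZ; last first.
    by apply: bdd_measurableM; apply: bdd_measurableD => //; exact: bdd_measurable_cst.
  by apply: wint_ge0 => t Dt; rewrite mulN1r oppr_ge0 fg_le0.
have := wint_cov _ _ _ g0 bf bg Ef.
have := mulr_le0_ge0 cov_le0 (wint_ge0 _ (fun _ _ => ler01)).
lra.
Qed.

Lemma wint_mean f : bdd_measurable f -> (forall t, D t -> 0 <= f t <= 1) ->
  exists2 m, 0 <= m <= 1 & wint f = m * wint1.
Proof.
move=> bf f01.
have f_ge0 t : D t -> 0 <= f t by move=> /f01 /andP[].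
have le_f1 : wint f <= wint1.
  by apply: ler_wint => //; [exact: bdd_measurable_cst | move=> t /f01 /andP[]].
have [E1_0 | E1_neq0] := eqVneq wint1 0.
  exists 0; first by rewrite lexx ler01.
  by rewrite mul0r; apply/le_anti; rewrite wint_ge0 // -E1_0 le_f1.
have E1_gt0 : 0 < wint1 by rewrite lt_neqAle eq_sym E1_neq0 wint_ge0.
exists (wint f / wint1); last by rewrite divfK.
by rewrite divr_ge0 ?wint_ge0 //= ler_pdivrMr // mul1r.
Qed.

Lemma chebyshev_wint_pow u a b :
  bdd_measurable u -> (forall t, D t -> 0 <= u t <= 1) ->
  wint (fun t => u t ^+ a) * wint (fun t => u t ^+ b) <=
  wint (fun t => u t ^+ (a + b)) * wint1.
Proof.
move=> bu u01.
have u_ge0 t : D t -> 0 <= u t by move=> /u01 /andP[].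
case: a => [|a].
  by rewrite add0n mulrC (_ : wint (fun t => u t ^+ 0) = wint1).
(* With [c ^+ a.+1] the mean of [u ^+ a.+1], the factors [u ^+ a.+1 - c ^+ a.+1]
   and [u ^+ b - c ^+ b] have the same sign everywhere. *)
have [m /andP[m_ge0 m_le1] Em] := wint_mean _ (bdd_measurableX a.+1 _ bu)
  (fun t Dt => exprn_itv01 a.+1 _ (u01 t Dt)).
have [c [c_ge0 _ cE]] := exists_root01 _ _ (ltn0Sn a) m_ge0 m_le1.
rewrite -cE in Em.
have := chebyshev_wint _ _ _ (c ^+ b)
  (bdd_measurableX _ _ bu) (bdd_measurableX b _ bu) Em.
rewrite (_ : wint (fun t => _ * _) = wint (fun t => u t ^+ (a.+1 + b))).
  by apply=> t Dt; apply: subrX_mul_ge0 (u_ge0 t Dt) c_ge0.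
by apply: eq_Rintegral => t _; rewrite exprD.
Qed.

Lemma chebyshev_wint_pow_compl u n m :
  bdd_measurable u -> (forall t, D t -> 0 <= u t <= 1) ->
  wint (fun t => u t ^+ n * (1 - u t) ^+ m) * wint1 <=
  wint (fun t => u t ^+ n) * wint (fun t => (1 - u t) ^+ m).
Proof.
move=> bu u01.
case: n => [|n].
  rewrite mulrC (_ : wint (fun t => _ * _) = wint (fun t => (1 - u t) ^+ m)) //.
  by apply: eq_Rintegral => t _; rewrite mul1r.
have bu_compl := bdd_measurableB _ _ (bdd_measurable_cst 1) bu.
have [p /andP[p_ge0 p_le1] Ep] := wint_mean _ (bdd_measurableX n.+1 _ bu)
  (fun t Dt => exprn_itv01 n.+1 _ (u01 t Dt)).
have [c [c_ge0 c_le1 cE]] := exists_root01 _ _ (ltn0Sn n) p_ge0 p_le1.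
rewrite -cE in Ep.
apply: (chebyshev_wint_rev _ _ _ ((1 - c) ^+ m)
  (bdd_measurableX _ _ bu) (bdd_measurableX m _ bu_compl) Ep).
by move=> t Dt; apply: subrX_mul_compl_le0; rewrite ?u01 ?c_ge0.
Qed.

End Chebyshev.

Section BetaMoments.
Local Open Scope classical_set_scope.
Variables (R : realType) (r1 r0 : R).
Hypotheses (r1_gt0 : 0 < r1) (r0_gt0 : 0 < r0).

Local Notation mu := (@lebesgue_measure R).
Local Notation I01 := (`[0%R, 1%R] : set R).

Definition beta_weight (t : R) : R := t `^ (r1 - 1) * (1 - t) `^ (r0 - 1).

Definition beta_moment (n m : nat) : R :=
  wint mu I01 beta_weight (fun t => t ^+ n * (1 - t) ^+ m).

Lemma itv01_bounds t : I01 t -> 0 <= t <= 1.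
Proof. by rewrite /= in_itv. Qed.

Lemma powR_natD (x e : R) (n : nat) : 0 <= x -> 0 < e + 1 ->
  x `^ (n%:R + e) = x ^+ n * x `^ e.
Proof.
move=> x_ge0 e1_gt0; case: n => [|n]; first by rewrite add0r expr0 mul1r.
rewrite powRD ?powR_mulrn //; apply/implyP => /eqP ne_0.
have : 1 <= n.+1%:R :> R by rewrite ler1n.
lra.
Qed.

Lemma Beta_moment n m : Beta (n%:R + r1) (m%:R + r0) = beta_moment n m.
Proof.
apply: eq_Rintegral => t; rewrite inE => /itv01_bounds/andP[t_ge0 t_le1].
have e1 : 0 < r1 - 1 + 1 by rewrite subrK.
have e0 : 0 < r0 - 1 + 1 by rewrite subrK.
rewrite /beta_weight -!addrA powR_natD // powR_natD ?subr_ge0 //; ring.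
Qed.

Lemma lleaf_moment n m : lleaf r1 r0 n m = beta_moment n m / beta_moment 0 0.
Proof. by rewrite /lleaf Beta_moment -(Beta_moment 0 0) !add0r. Qed.

Lemma beta_weight_ge0 t : 0 <= beta_weight t.
Proof. by rewrite mulr_ge0 ?powR_ge0. Qed.

Lemma measurable_beta_weight : measurable_fun I01 beta_weight.
Proof.
apply: measurable_funTS; apply: measurable_realfun.measurable_funM.
  exact: measurable_realfun.measurable_powR.
apply: (measurableT_comp (measurable_realfun.measurable_powR _)).
exact: measurable_realfun.measurable_funB.
Qed.

Lemma bdd_measurable_id : bdd_measurable I01 (fun t => t).
Proof.
split; first exact: measurable_id.
by exists 1 => t /itv01_bounds/andP[t_ge0 t_le1]; rewrite ger0_norm.
Qed.

Lemma bdd_measurable_compl : bdd_measurable I01 (fun t => 1 - t).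
Proof.
by apply: bdd_measurableB; [exact: bdd_measurable_cst | exact: bdd_measurable_id].
Qed.

Lemma bdd_measurable_beta_monomial n m :
  bdd_measurable I01 (fun t => t ^+ n * (1 - t) ^+ m).
Proof.
apply: bdd_measurableM; apply: bdd_measurableX;
  [exact: bdd_measurable_id | exact: bdd_measurable_compl].
Qed.

Local Notation wintB := (wint mu I01 beta_weight).

Lemma beta_moment00 : beta_moment 0 0 = wintB (fun=> 1).
Proof. by apply: eq_Rintegral => t _; congr (_ * _); exact: mulr1. Qed.

Lemma beta_momentn0 n : beta_moment n 0 = wintB (fun t => t ^+ n).
Proof. by apply: eq_Rintegral => t _; rewrite mulr1. Qed.

Lemma beta_moment0n n : beta_moment 0 n = wintB (fun t => (1 - t) ^+ n).
Proof. by apply: eq_Rintegral => t _; rewrite mul1r. Qed.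

Lemma powR_ge_min (a t e : R) : 0 < a -> a <= t -> t <= 1 ->
  Num.min 1 (a `^ e) <= t `^ e.
Proof.
move=> a_gt0 a_le_t t_le1; have t_gt0 := lt_le_trans a_gt0 a_le_t.
have [e_ge0|e_lt0] := leP 0 e.
  rewrite ge_min; apply/orP; right.
  by apply: ge0_ler_powR => //; rewrite nnegrE ltW.
rewrite ge_min; apply/orP; left.
rewrite -[e]opprK powRN invf_ge1 ?powR_gt0 //.
have := @ge0_ler_powR R (- e) _ t 1; rewrite powR1; apply => //.
- by rewrite oppr_ge0 ltW.
- by rewrite nnegrE ltW.
- by rewrite nnegrE.
Qed.

Definition beta_lbound (n m : nat) : R :=
  Num.min 1 (4^-1 `^ (r1 - 1)) * Num.min 1 (4^-1 `^ (r0 - 1)) *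
  ((4^-1) ^+ n * (4^-1) ^+ m).

Lemma beta_lbound_gt0 n m : 0 < beta_lbound n m.
Proof. by rewrite !mulr_gt0 ?exprn_gt0 ?lt_min ?ltr01 ?powR_gt0 ?invr_gt0. Qed.

Lemma beta_lbound_le n m (t : R) : 4^-1 <= t -> t <= 3/4 ->
  beta_lbound n m <= beta_weight t * (t ^+ n * (1 - t) ^+ m).
Proof.
move=> qt t34; have q_gt0 : 0 < 4^-1 :> R by rewrite invr_gt0.
have lb_ge0 e : 0 <= Num.min 1 (4^-1 `^ e) :> R.
  by rewrite le_min ler01 powR_ge0.
have qX_ge0 k : 0 <= (4^-1) ^+ k :> R by rewrite exprn_ge0 // ltW.
apply: ler_pM; rewrite ?mulr_ge0 //.
  by apply: ler_pM; rewrite // powR_ge_min //; lra.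
by apply: ler_pM; rewrite // lerXn2r ?nnegrE //; lra.
Qed.

Section IntegrableWeight.
Hypothesis w_int : mu.-integrable I01 (EFin \o beta_weight).

Lemma beta_moment_gt0 n m : 0 < beta_moment n m.
Proof.
have sub : `[4^-1, 3/4] `<=` I01.
  by move=> t; rewrite /= !in_itv /= => /andP[? ?]; apply/andP; split; lra.
apply: (Rintegral_gt0 mu _ _ _ (beta_lbound n m)
  (measurable_itv _) (measurable_itv _) sub).
- by apply: integrable_wM => //; exact: bdd_measurable_beta_monomial.
- move=> t /itv01_bounds/andP[t_ge0 t_le1].
  by rewrite mulr_ge0 ?beta_weight_ge0 // mulr_ge0 // exprn_ge0 // subr_ge0.
- by move=> t; rewrite /= in_itv /= => /andP; case; exact: beta_lbound_le.
- exact: beta_lbound_gt0.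
- have := @lebesgue_measure_itv R `[4^-1, 3/4]%R; rewrite /= => ->.
  by rewrite lte_fin ifT -?EFinD ?lte_fin; lra.
Qed.

Lemma beta_moment_mixed n m :
  beta_moment n m * beta_moment 0 0 <= beta_moment n 0 * beta_moment 0 m.
Proof.
rewrite beta_moment00 beta_momentn0 beta_moment0n.
apply: chebyshev_wint_pow_compl => //; first by move=> t _; exact: beta_weight_ge0.
exact: bdd_measurable_id.
Qed.

Lemma beta_moment_superadd1 a b :
  beta_moment a 0 * beta_moment b 0 <= beta_moment (a + b) 0 * beta_moment 0 0.
Proof.
rewrite beta_moment00 !beta_momentn0.
apply: chebyshev_wint_pow => //; first by move=> t _; exact: beta_weight_ge0.
exact: bdd_measurable_id.
Qed.

Lemma beta_moment_superadd0 a b :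
  beta_moment 0 a * beta_moment 0 b <= beta_moment 0 (a + b) * beta_moment 0 0.
Proof.
rewrite beta_moment00 !beta_moment0n.
apply: chebyshev_wint_pow => //; first by move=> t _; exact: beta_weight_ge0.
  exact: bdd_measurable_compl.
by move=> t /itv01_bounds/andP[t_ge0 t_le1]; rewrite subr_ge0 t_le1 lerBlDr lerDl.
Qed.

End IntegrableWeight.

(* The weight is in fact always integrable; when it is not, the junk value
   [fine +oo = 0] of the integral makes every [lleaf] vanish. *)
Lemma lleaf_nonintegrable n m :
  ~ mu.-integrable I01 (EFin \o beta_weight) -> lleaf r1 r0 n m = 0.
Proof.
move=> w_nint; rewrite lleaf_moment (_ : beta_moment 0 0 = 0) ?invr0 ?mulr0 //.
have w_norm : (\int[mu]_(t in I01) `|(EFin \o beta_weight) t| = +oo)%E.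
  apply/eqP; rewrite eq_le leey /= leNgt; apply/negP => w_fin; apply: w_nint.
  apply/integrableP; split => //.
  by apply/measurable_realfun.measurable_EFinP; exact: measurable_beta_weight.
rewrite beta_moment00 /wint /Rintegral -[RHS]/(fine +oo%E) -w_norm.
by congr fine; apply: eq_integral => t _; rewrite mulr1 /= ger0_norm ?beta_weight_ge0.
Qed.

Lemma ln_lleaf00 : ln (lleaf r1 r0 0 0) = 0.
Proof.
have [w_int|w_nint] := pselect (mu.-integrable I01 (EFin \o beta_weight)).
  by rewrite lleaf_moment divff ?ln1 // lt0r_neq0 // beta_moment_gt0.
by rewrite lleaf_nonintegrable // ln0.
Qed.

Lemma ln_lleaf_le n m p q n' m' p' q' :
  (mu.-integrable I01 (EFin \o beta_weight) ->
    beta_moment n m * beta_moment p q <= beta_moment n' m' * beta_moment p' q') ->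
  ln (lleaf r1 r0 n m) + ln (lleaf r1 r0 p q) <=
  ln (lleaf r1 r0 n' m') + ln (lleaf r1 r0 p' q').
Proof.
move=> le_moment.
have [w_int|w_nint] := pselect (mu.-integrable I01 (EFin \o beta_weight)).
  by rewrite !lleaf_moment ln_div_le ?beta_moment_gt0 ?le_moment.
by rewrite !lleaf_nonintegrable // ln0.
Qed.

Lemma ln_lleaf_mixed n m :
  ln (lleaf r1 r0 n m) <= ln (lleaf r1 r0 n 0) + ln (lleaf r1 r0 0 m).
Proof.
rewrite -[leLHS]addr0 -ln_lleaf00; apply: ln_lleaf_le => w_int.
exact: beta_moment_mixed.
Qed.

Lemma ln_lleaf_superadd1 a b :
  ln (lleaf r1 r0 a 0) + ln (lleaf r1 r0 b 0) <= ln (lleaf r1 r0 (a + b) 0).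
Proof.
rewrite -[leRHS]addr0 -ln_lleaf00; apply: ln_lleaf_le => w_int.
exact: beta_moment_superadd1.
Qed.

Lemma ln_lleaf_superadd0 a b :
  ln (lleaf r1 r0 0 a) + ln (lleaf r1 r0 0 b) <= ln (lleaf r1 r0 0 (a + b)).
Proof.
rewrite -[leRHS]addr0 -ln_lleaf00; apply: ln_lleaf_le => w_int.
exact: beta_moment_superadd0.
Qed.

End BetaMoments.

Lemma neglog_ge {R : realType} (p : R) : ((- ln p)%:E <= neglog p)%E.
Proof. by rewrite /neglog; case: eqP => _; [exact: leey | exact: lexx]. Qed.

Lemma neglog_ge0 {R : realType} (p : R) : p <= 1 -> (0 <= neglog p)%E.
Proof.
move=> p_le1; rewrite /neglog; case: eqP => _; first exact: le0y.
by rewrite lee_fin oppr_ge0 ln_le0.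
Qed.

Lemma neglog_gt0E {R : realType} (p : R) : 0 < p -> neglog p = (- ln p)%:E.
Proof. by move=> p_gt0; rewrite /neglog gt_eqF. Qed.

Lemma cnt_restr {N F : nat} (X : 'I_N -> 'I_F -> bool) (Y : 'I_N -> bool)
    (I : {set 'I_N}) f k :
  cnt Y I k = (cnt Y (restr X I f false) k + cnt Y (restr X I f true) k)%N.
Proof.
rewrite /cnt -(cardsID [set i | X i f] [set i in I | Y i == k]) addnC.
by congr (_ + _)%N; apply: eq_card => i; rewrite !inE;
  case: (X i f); case: (i \in I); case: (Y i == k).
Qed.

Section PerfectSplitHeuristic.
Variables (R : realType) (rho1 rho0 alpha beta : R).
Hypotheses (rho1_gt0 : 0 < rho1) (rho0_gt0 : 0 < rho0)
  (alpha_gt0 : 0 < alpha) (alpha_lt1 : alpha < 1) (beta_ge0 : 0 <= beta).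
Variables (N F : nat) (X : 'I_N -> 'I_F -> bool) (Y : 'I_N -> bool).

Local Notation L n m := (ln (lleaf rho1 rho0 n m)).
Local Notation h := (hOR rho1 rho0 alpha beta Y).

Lemma psplit_gt0 d : 0 < psplit alpha beta d.
Proof. by rewrite /psplit mulr_gt0 // powR_gt0. Qed.

Lemma ln_psplit_le0 d : ln (psplit alpha beta d) <= 0.
Proof.
apply: ln_le0; apply: le_trans (ltW alpha_lt1); rewrite /psplit.
rewrite ger_pMr // powRN invf_le1 ?powR_gt0 //.
by rewrite -[leLHS](powRr0 (1 + d%:R)) ler_powR // lerDl.
Qed.

Lemma ln_pinner_le I d f :
  f \in Vset X I -> ln (pinner alpha beta X d I) <= ln (psplit alpha beta d).
Proof.
move=> fV; have V_gt0 : (0 < #|Vset X I|)%N by apply/card_gt0P; exists f.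
have ps_gt0 := psplit_gt0 d.
rewrite /pinner ifF; last by apply/negbTE/set0Pn; exists f.
rewrite ler_ln ?posrE ?divr_gt0 ?ltr0n // ler_pdivrMr ?ltr0n //.
by rewrite ler_peMr ?ler1n // ltW.
Qed.

Lemma pinner_gt0 I d f : f \in Vset X I -> 0 < pinner alpha beta X d I.
Proof.
move=> fV; have V_gt0 : (0 < #|Vset X I|)%N by apply/card_gt0P; exists f.
rewrite /pinner ifF; last by apply/negbTE/set0Pn; exists f.
by rewrite divr_gt0 ?psplit_gt0 ?ltr0n.
Qed.

Lemma hOR_le_leaf J d : h J d <= - L (cnt Y J true) (cnt Y J false).
Proof. by rewrite /hOR lerN2 le_max lexx. Qed.

Lemma hOR_le_split J d :
  h J d <= - (ln (psplit alpha beta d) + L (cnt Y J true) 0 + L 0 (cnt Y J false)).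
Proof. by rewrite /hOR lerN2 le_max lexx orbT. Qed.

Lemma hOR_ge_pure J d : - (L (cnt Y J true) 0 + L 0 (cnt Y J false)) <= h J d.
Proof.
rewrite /hOR lerN2 ge_max ln_lleaf_mixed //=.
by have := ln_psplit_le0 d; lra.
Qed.

Lemma hOR_le_children I d f : f \in Vset X I ->
  h I d <= - ln (pinner alpha beta X d I) +
           h (restr X I f false) d.+1 + h (restr X I f true) d.+1.
Proof.
move=> fV; set I0 := restr X I f false; set I1 := restr X I f true.
apply: le_trans (hOR_le_split I d) _.
rewrite (cnt_restr X Y I f true) (cnt_restr X Y I f false).
apply: (@le_trans _ _ (- (ln (pinner alpha beta X d I) +
    (L (cnt Y I0 true) 0 + L (cnt Y I1 true) 0) +
    (L 0 (cnt Y I0 false) + L 0 (cnt Y I1 false))))).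
  rewrite lerN2 !lerD //; first exact: (ln_pinner_le _ _ f fV).
    exact: ln_lleaf_superadd1.
  exact: ln_lleaf_superadd0.
have regroup (p a1 b1 a0 b0 : R) :
  - (p + (a1 + b1) + (a0 + b0)) = - p + - (a1 + a0) + - (b1 + b0) by ring.
by rewrite regroup !lerD ?hOR_ge_pure.
Qed.

Lemma hOR_le_cost I d (t : ptree F) : valid X I d t ->
  ((h I d)%:E <= cost rho1 rho0 alpha beta X Y I d t)%E.
Proof.
elim: t I d => [|f t0 IH0 t1 IH1] I d /=.
  move=> _; rewrite /leaf_cost -[X in (X <= _)%E]add0e.
  apply: leeD; last by apply: le_trans (neglog_ge _); rewrite lee_fin hOR_le_leaf.
  apply: neglog_ge0; rewrite /pleaf; case: ifP => _ //.
  by rewrite lerBlDr lerDl; exact/ltW/psplit_gt0.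
case/and4P=> _ fV /IH0 le_h0 /IH1 le_h1.
apply: le_trans (leeD (leeD (lexx _) le_h0) le_h1).
rewrite /inner_cost neglog_gt0E ?(pinner_gt0 _ _ _ fV) // -!EFinD lee_fin.
exact: hOR_le_children.
Qed.

Lemma hOR_le_fOR I d :
  ((h I d)%:E <= fOR rho1 rho0 alpha beta X Y I d)%E.
Proof. by apply/ereal_infP => _ [t t_valid <-]; exact: hOR_le_cost. Qed.

End PerfectSplitHeuristic.

Theorem corollary15 (R : realType) (rho1 rho0 alpha beta : R)
  (hrho1 : 0 < rho1) (hrho0 : 0 < rho0)
  (halpha0 : 0 < alpha) (halpha1 : alpha < 1) (hbeta : 0 <= beta)
  (N F : nat) (X : 'I_N -> 'I_F -> bool) (Y : 'I_N -> bool) :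
  (forall (I : {set 'I_N}) (d : nat),
      reach X I d -> I != finset.set0 ->
      ((hOR rho1 rho0 alpha beta Y I d)%:E
         <= fOR rho1 rho0 alpha beta X Y I d)%E) /\
  (forall (I : {set 'I_N}) (d : nat) (f : 'I_F),
      reach X I d -> I != finset.set0 -> (d < F)%N -> f \in Vset X I ->
      ((hAND rho1 rho0 alpha beta X Y I d f)%:E
         <= fAND rho1 rho0 alpha beta X Y I d f)%E).
Proof.
split=> [I d _ _ | I d f _ _ _ _]; first exact: hOR_le_fOR.
by rewrite /hAND /fAND EFinD leeD // hOR_le_fOR.
Qed.
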